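(* Let $G$ be a graph. Then $\lfloor \mathrm{sp}\rfloor(G)=0$ if and only if $G$ is a disjoint union of paths.
   Context: All graphs are finite, have at least one vertex, have no loops, and may have multiple (parallel) edges. A unique shortest path is a shortest $u$–$v$ path $P$ such that every $u$–$v$ path with the same number of vertices is identical to $P$, where two paths with different edge sequences are different even if their vertex sequences agree; a single vertex is a unique shortest path. The parade number $\mathrm{usp}(G)$ is the largest number of vertices of a unique shortest path in $G$. The spectator number is $\mathrm{sp}(G)=|V(G)|-\mathrm{usp}(G)$. A minor of $H$ is any graph obtained from $H$ by a sequence of: deleting an isolated vertex, deleting an edge, contracting an edge that has no edge parallel to it. The spectator floor $\lfloor \mathrm{sp}\rfloor(G)$ is the minimum of $\mathrm{sp}(H)$ over all graphs $H$ of which $G$ is a minor. *)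

From Stdlib Require Import Relations.
From mathcomp Require Import all_boot.
From mathcomp Require Import boolp.

Set Implicit Arguments.
Unset Strict Implicit.
Unset Printing Implicit Defensive.

(* Edges are elements of a finite type E; each edge has two (distinct)
   endpoints; parallel edges are distinct elements of E with the same
   endpoints.  The orientation of [gends e] is irrelevant (see [joins]). *)
Record graph := Graph {
  gV : finType;
  gE : finType;
  gends : gE -> gV * gV;
  gnoloop : forall e, (gends e).1 != (gends e).2;
  gnonempty : 0 < #|gV|
}.

Definition joins (G : graph) (e : gE G) (x y : gV G) : bool :=
  (gends e == (x, y)) || (gends e == (y, x)).

Definition is_path (G : graph) (vs : seq (gV G)) (es : seq (gE G)) : bool :=
  [&& size vs == (size es).+1, uniq vs &
      all (fun t => joins t.1 t.2.1 t.2.2) (zip es (zip vs (behead vs)))].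

Definition uv_path (G : graph) (u v : gV G) vs es : bool :=
  [&& is_path (G:=G) vs es, ohead vs == Some u & last u vs == v].

Definition unique_shortest_path (G : graph) (vs : seq (gV G)) (es : seq (gE G)) : Prop :=
  exists u v : gV G,
    [/\ uv_path u v vs es,
        (forall vs' es', uv_path u v vs' es' -> size vs <= size vs') &
        (forall vs' es', uv_path u v vs' es' -> size vs' = size vs ->
            vs' = vs /\ es' = es)].

Definition has_usp_of_size (G : graph) (k : nat) : Prop :=
  exists vs es, unique_shortest_path (G:=G) vs es /\ size vs = k.

(* parade number: the largest number of vertices of a unique shortest path
   (paths have distinct vertices, so this is at most #|V|). *)
Definition usp (G : graph) : nat :=
  \max_(k < #|gV G|.+1 | `[< has_usp_of_size G k >]) k.

Definition sp (G : graph) : nat := #|gV G| - usp G.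

Definition iso_step (G H : graph) : Prop :=
  exists (f : gV G -> gV H) (g : gE G -> gE H),
    [/\ bijective f, bijective g &
        forall e, joins (g e) (f (gends e).1) (f (gends e).2)].

Definition delete_vertex_step (G H : graph) : Prop :=
  exists (v : gV H) (f : gV G -> gV H) (g : gE G -> gE H),
    [/\ (forall e : gE H, ((gends e).1 != v) && ((gends e).2 != v)),
        injective f,
        (forall x, x != v <-> exists y, f y = x),
        bijective g &
        forall e, joins (g e) (f (gends e).1) (f (gends e).2)].

Definition delete_edge_step (G H : graph) : Prop :=
  exists (e0 : gE H) (f : gV G -> gV H) (g : gE G -> gE H),
    [/\ bijective f, injective g,
        (forall e, e != e0 <-> exists e', g e' = e) &
        forall e, joins (g e) (f (gends e).1) (f (gends e).2)].

(* G is obtained from H by contracting an edge e0 = uv that has no edge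
   parallel to it: f : V(H) -> V(G) is onto and identifies exactly u and v;
   the edges of G are the edges of H other than e0, with endpoints mapped by f. *)
Definition contract_edge_step (G H : graph) : Prop :=
  exists (e0 : gE H) (f : gV H -> gV G) (g : gE G -> gE H),
    let u := (gends e0).1 in let v := (gends e0).2 in
    [/\ (forall e, joins e u v -> e = e0) /\
        (forall y, exists x, f x = y),
        (forall x y, f x = f y <->
           (x = y \/ (x = u /\ y = v) \/ (x = v /\ y = u))),
        injective g,
        (forall e, e != e0 <-> exists e', g e' = e) &
        forall e, joins e (f (gends (g e)).1) (f (gends (g e)).2)].

Definition minor_step (G H : graph) : Prop :=
  [\/ iso_step G H, delete_vertex_step G H, delete_edge_step G H
    | contract_edge_step G H].

Definition minor : graph -> graph -> Prop := clos_refl_trans graph minor_step.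

Lemma spfloor_ex (G : graph) :
  exists n, `[< exists H, minor G H /\ sp H = n >].
Proof.
exists (sp G); apply/asboolP; exists G; split=> //; exact: rt_refl.
Qed.

Definition spfloor (G : graph) : nat := ex_minn (spfloor_ex G).

(* G is a disjoint union of paths: V(G) is partitioned into nonempty
   sequences s (the paths), every edge joins two consecutive vertices of
   some block, and each pair of consecutive vertices of a block is joined
   by exactly one edge. *)
Definition disjoint_union_of_paths (G : graph) : Prop :=
  exists ss : seq (seq (gV G)),
    [/\ all (fun s => s != [::]) ss,
        uniq (flatten ss),
        (forall x, x \in flatten ss),
        (forall e, exists2 s, s \in ss &
           exists2 i, i.+1 < size s &
             exists x0, joins e (nth x0 s i) (nth x0 s i.+1)) &
        (forall s, s \in ss -> forall i, i.+1 < size s ->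
           forall x0, #|[set e | joins e (nth x0 s i) (nth x0 s i.+1)]| = 1)].

From Stdlib Require Import Relations.
From mathcomp Require Import all_boot boolp zify.

Set Implicit Arguments.
Unset Strict Implicit.
Unset Printing Implicit Defensive.

(* A position function [pos] on the vertices is a path embedding when it is
   injective, every edge joins two consecutive positions, and distinct edges have
   distinct lower ends (so no two edges are parallel).  Graphs with a path
   embedding are exactly the disjoint unions of paths: list the vertices by
   position and cut the list wherever two neighbours are not adjacent.

   If sp H = 0, then H has a unique shortest path through all its vertices.  Such
   a path has no chords (they would shorten it) and no edge parallel to one of its
   edges (it would give a second path of the same length), so its vertex order is
   a path embedding of H.  Path embeddings pass to minors: for deletions restrict
   them, and contracting the edge between positions m and m+1 merges these two
   positions and shifts the later ones down by one.  Conversely, laying out the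
   paths of G one after the other embeds G as a spanning subgraph of the path on
   |V(G)| vertices, whose spectator number is 0. *)

Section GraphBasics.
Variable G : graph.
Implicit Types (e : gE G) (x y : gV G).

Lemma joinsP e x y : joins e x y ->
  ((gends e).1 = x /\ (gends e).2 = y) \/ ((gends e).1 = y /\ (gends e).2 = x).
Proof. by rewrite /joins; case: (gends e) => p q /orP[] /eqP[-> ->]; [left | right]. Qed.

Lemma joinsC e x y : joins e x y = joins e y x.
Proof. by rewrite /joins orbC. Qed.

Lemma joins_ends e : joins e (gends e).1 (gends e).2.
Proof. by rewrite /joins -surjective_pairing eqxx. Qed.

Lemma is_pathP (vs : seq (gV G)) (es : seq (gE G)) :
  is_path vs es <->
  [/\ size vs = (size es).+1, uniq vs &
      forall e0 x0 k, k < size es -> joins (nth e0 es k) (nth x0 vs k) (nth x0 vs k.+1)].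
Proof.
have size_zip_path : size vs = (size es).+1 ->
    size (zip es (zip vs (behead vs))) = size es.
  by move=> Hs; rewrite !size_zip size_behead Hs /=; lia.
have nth_zip_path e0 x0 k : size vs = (size es).+1 -> k < size es ->
    nth (e0, (x0, x0)) (zip es (zip vs (behead vs))) k =
    (nth e0 es k, (nth x0 vs k, nth x0 vs k.+1)).
  move=> Hs Hk; rewrite nth_zip_cond size_zip_path // Hk /= nth_zip_cond.
  by rewrite size_zip size_behead Hs /= (_ : minn _ _ = size es) ?Hk ?nth_behead //; lia.
split=> [/and3P[/eqP Hs Hu /allP Ha] | [Hs Hu Ha]].
  split=> // e0 x0 k Hk.
  have Hk' : k < size (zip es (zip vs (behead vs))) by rewrite size_zip_path.
  by have := Ha _ (mem_nth (e0, (x0, x0)) Hk'); rewrite nth_zip_path.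
apply/and3P; split; rewrite ?Hs //.
apply/allP => -[e0 [x0 y0]] /(nthP (e0, (x0, x0)))[k].
by rewrite size_zip_path // => Hk <-; rewrite nth_zip_path //; apply: Ha.
Qed.

End GraphBasics.

Lemma sp_eq0P (H : graph) : sp H = 0 <-> has_usp_of_size H #|gV H|.
Proof.
rewrite /sp; split=> [Hsp | Hfull]; last first.
  by apply/eqP; rewrite subn_eq0 (@leq_bigmax_cond _ _ _ ord_max) //; apply/asboolP.
case: (boolP `[< has_usp_of_size H #|gV H| >]) => [/asboolP // | Hn].
suff : usp H <= #|gV H|.-1 by have := gnonempty H; lia.
apply/bigmax_leqP => k Pk; have := ltn_ord k; rewrite ltnS leq_eqVlt.
case/orP=> [/eqP Ek | ]; last by lia.
by move: Pk; rewrite Ek (negbTE Hn).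
Qed.

Section UniqueShortestPath.
Variables (H : graph) (u v : gV H) (vs : seq (gV H)) (es : seq (gE H)).
Hypothesis uv_vs : uv_path u v vs es.

Lemma is_path_shortcut e i j x0 : i < j < size vs ->
  joins e (nth x0 vs i) (nth x0 vs j) ->
  uv_path u v (take i.+1 vs ++ drop j vs) (take i es ++ e :: drop j es).
Proof.
case/and3P: uv_vs => /is_pathP[Hs Hu Ha] /eqP Hh /eqP Hl /andP[Hij Hj] He.
set vs' := _ ++ _; set es' := _ ++ _.
have Hvs' : size vs' = i.+1 + (size vs - j).
  by rewrite size_cat size_take size_drop; case: ltnP; lia.
have Hes' : size es' = i + (size es - j).+1.
  by rewrite size_cat /= size_take size_drop; case: ltnP; lia.
have nth_vs' y k : nth y vs' k = nth y vs (if k <= i then k else k - i.+1 + j).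
  rewrite nth_cat size_take (_ : i.+1 < size vs) ?ltnS; last by lia.
  by case: leqP => Hk; rewrite ?nth_take ?nth_drop ?ltnS //; congr nth; lia.
have nth_es' d k : k != i -> nth d es' k = nth d es (if k < i then k else k - i.+1 + j).
  move=> Hki; rewrite nth_cat size_take (_ : i < size es); last by lia.
  case: ltnP => Hk; rewrite ?nth_take //.
  by rewrite (_ : k - i = (k - i.+1).+1) /= ?nth_drop 1?addnC //; lia.
apply/and3P; split.
- apply/is_pathP; split; first by lia.
    apply: subseq_uniq Hu; rewrite -[X in subseq _ X](cat_take_drop i.+1).
    rewrite cat_subseq // (_ : j = j - i.+1 + i.+1) -?drop_drop ?drop_subseq //; lia.
  move=> d y k Hk; rewrite !nth_vs'.
  have [-> | Hki] := eqVneq k i.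
    rewrite leqnn ltnn subnn add0n nth_cat size_take (_ : i < size es); last by lia.
    by rewrite ltnn subnn !(set_nth_default x0 y) //; lia.
  rewrite nth_es' //; case: (ltngtP k i) Hki => // Hki _.
    by apply: Ha; lia.
  rewrite (_ : k.+1 - i.+1 + j = (k - i.+1 + j).+1).
    by apply: Ha; lia.
  by lia.
- by move: Hh; rewrite /vs'; case: (vs) => //= x r [->].
- apply/eqP; rewrite -Hl -!(nth_last u) nth_vs' Hvs' ifF; [congr nth | ]; lia.
Qed.

Hypothesis shortest : forall vs' es', uv_path u v vs' es' -> size vs <= size vs'.
Hypothesis unique : forall vs' es', uv_path u v vs' es' -> size vs' = size vs ->
  vs' = vs /\ es' = es.

Lemma usp_no_chord e i j x0 : i.+1 < j < size vs ->
  ~~ joins e (nth x0 vs i) (nth x0 vs j).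
Proof.
move=> Hij; apply/negP => He.
have Hij' : i < j < size vs by case/andP: Hij => /ltnW -> ->.
have := shortest (is_path_shortcut Hij' He).
by rewrite size_cat size_take size_drop; case: ltnP; lia.
Qed.

Lemma usp_edge_unique e i x0 : i.+1 < size vs ->
  joins e (nth x0 vs i) (nth x0 vs i.+1) -> e = nth e es i.
Proof.
move=> Hi He; case/and3P: uv_vs => /is_pathP[Hs _ _] _ _.
have Hes : i < size es by lia.
have Hii : i < i.+1 < size vs by rewrite ltnSn.
have [_ <-] := unique (is_path_shortcut Hii He) (congr1 size (cat_take_drop _ _)).
by rewrite nth_cat size_take Hes ltnn subnn.
Qed.

End UniqueShortestPath.

Definition lower_end (G : graph) (pos : gV G -> nat) (e : gE G) : nat :=
  minn (pos (gends e).1) (pos (gends e).2).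

Definition path_embedding (G : graph) (pos : gV G -> nat) : Prop :=
  [/\ injective pos,
      forall e, (pos (gends e).1).+1 = pos (gends e).2 \/
                (pos (gends e).2).+1 = pos (gends e).1
    & injective (lower_end pos)].

Lemma lower_end_joins (G : graph) (pos : gV G -> nat) e a b :
  joins e a b -> lower_end pos e = minn (pos a) (pos b).
Proof. by rewrite /lower_end => /joinsP[] [-> ->]; rewrite // minnC. Qed.

Lemma spanning_usp_path_embedding (H : graph) :
  has_usp_of_size H #|gV H| -> exists pos : gV H -> nat, path_embedding pos.
Proof.
case=> vs [es [[u [v [Huv shortest unique]]] Hsize]].
case/and3P: (Huv) => /is_pathP[Hs Hu _] _ _.
have vs_full x : x \in vs.
  have Hsz : size (enum (gV H)) <= size vs by rewrite -cardE Hsize.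
  by have [_ ->] := uniq_min_size Hu (fun y _ => mem_enum _ y) Hsz; rewrite mem_enum.
pose pos x := index x vs.
have pos_lt x : pos x < size vs by rewrite index_mem.
have nth_pos x y : nth y vs (pos x) = x by apply: nth_index.
have edge_pos e x y : joins e x y -> pos x < pos y ->
    pos y = (pos x).+1 /\ e = nth e es (pos x).
  move=> Hj Hlt; have Hadj : pos y = (pos x).+1.
    apply/eqP; rewrite eqn_leq Hlt andbT leqNgt; apply/negP => Hlt'.
    have Hij : (pos x).+1 < pos y < size vs by rewrite Hlt' pos_lt.
    by have := usp_no_chord Huv shortest e x Hij; rewrite !nth_pos Hj.
  split=> //; apply: (usp_edge_unique Huv unique (x0 := x)); rewrite -Hadj ?nth_pos //.
have edge_ends e : exists2 i, e = nth e es i & lower_end pos e = i /\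
    ((pos (gends e).1).+1 = pos (gends e).2 \/ (pos (gends e).2).+1 = pos (gends e).1).
  rewrite /lower_end; case: (ltngtP (pos (gends e).1) (pos (gends e).2)) => [Hlt | Hlt | Heq].
  - have [Hy He] := edge_pos _ _ _ (joins_ends e) Hlt.
    by exists (pos (gends e).1); rewrite // Hy; split; [lia | left].
  - have [Hy He] := edge_pos _ _ _ (etrans (joinsC _ _ _) (joins_ends e)) Hlt.
    by exists (pos (gends e).2); rewrite // Hy; split; [lia | right].
  - by move: (gnoloop e); rewrite -(nth_pos (gends e).1 u) Heq nth_pos eqxx.
exists pos; split.
- by move=> x y Hxy; rewrite -(nth_pos x x) Hxy nth_pos.
- by move=> e; have [i _ []] := edge_ends e.
- move=> e1 e2 Hlow.
  have [i1 E1 [Hi1 Ha1]] := edge_ends e1; have [i2 E2 [Hi2 _]] := edge_ends e2.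
  have Ei : i2 = i1 by rewrite -Hi1 -Hi2 Hlow.
  rewrite E1 E2 Ei; apply: set_nth_default.
  by move: Hi1 Ha1 (pos_lt (gends e1).1) (pos_lt (gends e1).2); rewrite /lower_end; lia.
Qed.

Lemma path_embedding_subgraph (G H : graph) (f : gV G -> gV H) (g : gE G -> gE H)
    (pos : gV H -> nat) :
  injective f -> injective g ->
  (forall e, joins (g e) (f (gends e).1) (f (gends e).2)) ->
  path_embedding pos -> path_embedding (pos \o f).
Proof.
move=> f_inj g_inj fg_hom [pos_inj pos_adj low_inj].
have ends e :
    (pos (gends (g e)).1 = pos (f (gends e).1) /\ pos (gends (g e)).2 = pos (f (gends e).2)) \/
    (pos (gends (g e)).1 = pos (f (gends e).2) /\ pos (gends (g e)).2 = pos (f (gends e).1)).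
  by case: (joinsP (fg_hom e)) => -[-> ->]; auto.
split=> [x y /pos_inj /f_inj // | e /= | e1 e2 Hlow].
  by case: (ends e) (pos_adj (g e)) => -[<- <-]; lia.
by apply/g_inj/low_inj; rewrite !(lower_end_joins _ (fg_hom _)).
Qed.

Definition collapse (m p : nat) : nat := if p <= m then p else p.-1.

Lemma collapse_eq m a b : collapse m a = collapse m b <->
  a = b \/ (a = m /\ b = m.+1) \/ (a = m.+1 /\ b = m).
Proof. by rewrite /collapse; do 2 case: leqP => ? /=; lia. Qed.

Lemma collapse_minn m a b : collapse m (minn a b) = minn (collapse m a) (collapse m b).
Proof. by rewrite /collapse; do 3 case: leqP => ? /=; lia. Qed.

Lemma collapse_adj m a b : minn a b != m -> a.+1 = b \/ b.+1 = a ->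
  (collapse m a).+1 = collapse m b \/ (collapse m b).+1 = collapse m a.
Proof. by rewrite /collapse; do 2 case: leqP => ? /=; lia. Qed.

Lemma path_embedding_contract (G H : graph) (pos : gV H -> nat) :
  contract_edge_step G H -> path_embedding pos ->
  exists pos' : gV G -> nat, path_embedding pos'.
Proof.
case=> e0 [f [g /=]]; set u := (gends e0).1; set v := (gends e0).2.
case=> [[_ f_onto] f_eq g_inj g_im fg_hom] [pos_inj pos_adj low_inj].
set m := lower_end pos e0.
have collapse_pos x y : collapse m (pos x) = collapse m (pos y) <-> f x = f y.
  have -> : f x = f y <-> pos x = pos y \/ (pos x = pos u /\ pos y = pos v)
                                       \/ (pos x = pos v /\ pos y = pos u).
    rewrite f_eq; split=> [[-> | [[-> ->] | [-> ->]]] | ]; first [by auto | move].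
    by case=> [/pos_inj | [[/pos_inj -> /pos_inj] | [/pos_inj -> /pos_inj]]]; auto.
  by rewrite collapse_eq; have := pos_adj e0; rewrite /m /lower_end -/u -/v; lia.
have [pre preK] := choice f_onto.
pose pos' y := collapse m (pos (pre y)).
have pos'E x : pos' (f x) = collapse m (pos x) by apply/collapse_pos; rewrite preK.
have low_neq e : lower_end pos (g e) != m.
  apply/eqP => /low_inj Hge.
  by have := (g_im (g e)).2 (ex_intro _ e erefl); rewrite Hge eqxx.
have ends e : (pos' (gends e).1 = collapse m (pos (gends (g e)).1) /\
               pos' (gends e).2 = collapse m (pos (gends (g e)).2)) \/
              (pos' (gends e).1 = collapse m (pos (gends (g e)).2) /\
               pos' (gends e).2 = collapse m (pos (gends (g e)).1)).
  by case: (joinsP (fg_hom e)) => -[-> ->]; rewrite !pos'E; auto.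
have low' e : lower_end pos' e = collapse m (lower_end pos (g e)).
  by rewrite (lower_end_joins _ (fg_hom e)) !pos'E -collapse_minn.
exists pos'; split=> [y1 y2 /collapse_pos | e | e1 e2].
- by rewrite !preK.
- have := collapse_adj (low_neq e) (pos_adj (g e)).
  by case: (ends e) => -[-> ->]; tauto.
- rewrite !low' collapse_eq => Hlow; apply/g_inj/low_inj.
  by move: Hlow (low_neq e1) (low_neq e2); lia.
Qed.

Lemma path_embedding_minor (G H : graph) (pos : gV H -> nat) :
  minor G H -> path_embedding pos -> exists pos' : gV G -> nat, path_embedding pos'.
Proof.
move=> GH; elim: GH pos => {G H} [G H GH | G | G H K _ IH1 _ IH2] pos emb.
- case: GH => [[f [g [/bij_inj f_inj /bij_inj g_inj hom]]]
             | [_ [f [g [_ f_inj _ /bij_inj g_inj hom]]]]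
             | [_ [f [g [/bij_inj f_inj g_inj _ hom]]]]
             | GH].
  1-3: by exists (pos \o f); exact: path_embedding_subgraph f_inj g_inj hom emb.
  exact: path_embedding_contract GH emb.
- by exists pos.
- by have [pos' /IH1] := IH2 pos emb.
Qed.

Fixpoint runs (T : Type) (adj : rel T) (x : T) (r : seq T) : seq (seq T) :=
  if r is y :: r' then
    let ss := runs adj y r' in
    if adj x y then (x :: head [::] ss) :: behead ss else [:: x] :: ss
  else [:: [:: x]].

Section Runs.
Variables (T : eqType) (adj : rel T).

Lemma runs_cons x r : exists t rest, runs adj x r = (x :: t) :: rest.
Proof.
elim: r x => [|y r IH] x /=; first by exists [::], [::].
have [t [rest ->]] := IH y; case: (adj x y) => /=; first by exists (y :: t), rest.
by exists [::], ((y :: t) :: rest).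
Qed.

Lemma flatten_runs x r : flatten (runs adj x r) = x :: r.
Proof.
elim: r x => [|y r IH] x //=; have := IH y.
by have [t [rest ->]] := runs_cons y r; case: (adj x y) => /= ->.
Qed.

Lemma runs_nonempty x r : all (fun s => s != [::]) (runs adj x r).
Proof.
elim: r x => [|y r IH] x //=; have := IH y.
by have [t [rest ->]] := runs_cons y r; case: (adj x y) => /= ->.
Qed.

Lemma runs_sorted x r s : s \in runs adj x r -> sorted adj s.
Proof.
elim: r x s => [|y r IH] x s /=; first by rewrite inE => /eqP ->.
have := IH y; have [t [rest ->]] := runs_cons y r => /= IHy.
case Hxy: (adj x y); rewrite inE => /orP[/eqP -> | Hs] //; last exact: IHy.
- by rewrite /= Hxy; apply: (IHy (y :: t)); rewrite inE eqxx.
- by apply: IHy; rewrite inE Hs orbT.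
Qed.

Lemma runs_consecutive x r l1 a b l2 : x :: r = l1 ++ a :: b :: l2 -> adj a b ->
  exists s1 s2, s1 ++ a :: b :: s2 \in runs adj x r.
Proof.
elim: r x l1 => [|y r IH] x [|c l1] //=; first by case: l1.
- case=> -> -> _ Hab; rewrite Hab; have [t [rest ->]] := runs_cons b r.
  by exists [::], t; rewrite inE eqxx.
- case=> -> Er Hab; have [s1 [s2]] := IH y l1 Er Hab.
  have [t [rest ->]] := runs_cons y r; case: (adj c y) => /=; last first.
    by move=> Hs; exists s1, s2; rewrite inE Hs orbT.
  rewrite inE => /orP[/eqP Es | Hs]; last by exists s1, s2; rewrite inE Hs orbT.
  by exists (c :: s1), s2; rewrite inE -Es eqxx.
Qed.

End Runs.

Lemma enum_by_position (T : finType) (pos : T -> nat) : injective pos ->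
  exists l : seq T, [/\ uniq l, forall x, x \in l &
    forall a b, pos b = (pos a).+1 -> exists l1 l2, l = l1 ++ a :: b :: l2].
Proof.
move=> pos_inj; pose N := (\max_x pos x).+1.
have pos_lt x : pos x < N by rewrite ltnS; apply: leq_bigmax.
pose at_pos p := [pick x | pos x == p].
have at_posK : pcancel pos at_pos.
  by move=> x; rewrite /at_pos; case: pickP => [y /eqP /pos_inj -> // | /(_ x)]; rewrite eqxx.
exists (pmap at_pos (iota 0 N)); split.
- apply: (pmap_uniq (g := pos)) (iota_uniq _ _).
  by move=> p; rewrite /at_pos; case: pickP => [y /eqP |].
- by move=> x; rewrite mem_pmap -at_posK map_f // mem_iota add0n pos_lt.
- move=> a b Hb; have := pos_lt b; rewrite Hb => Hab.
  rewrite (_ : N = pos a + (N - pos a).-2.+2); last by lia.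
  rewrite iotaD pmap_cat /= at_posK -Hb at_posK.
  by exists (pmap at_pos (iota 0 (pos a))), (pmap at_pos (iota (pos b).+1 (N - pos a).-2)).
Qed.

Lemma path_embedding_disjoint_union_of_paths (G : graph) (pos : gV G -> nat) :
  path_embedding pos -> disjoint_union_of_paths G.
Proof.
case=> pos_inj pos_adj low_inj.
have [l [l_uniq l_full l_adj]] := enum_by_position pos_inj.
have [x [r Elr]] : exists x r, l = x :: r.
  case/card_gt0P: (gnonempty G) => x0 _; case: l l_full {l_uniq l_adj} => [|x r] l_full.
    by have := l_full x0.
  by exists x, r.
pose adj (y z : gV G) := [exists e : gE G, joins e y z].
have edge_in_run e a b : pos b = (pos a).+1 -> joins e a b ->
    exists2 s, s \in runs adj x r & exists2 i, i.+1 < size s &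
      exists y, joins e (nth y s i) (nth y s i.+1).
  move=> Hb He; have [l1 [l2 El]] := l_adj a b Hb.
  have Hab : adj a b by apply/existsP; exists e.
  have [s1 [s2 Hs]] := runs_consecutive (etrans (esym Elr) El) Hab.
  exists (s1 ++ a :: b :: s2) => //; exists (size s1); first by rewrite size_cat /=; lia.
  by exists a; rewrite nth_cat ltnn subnn nth_cat ltnNge leqnSn /= subSnn.
have parallel (e1 e2 : gE G) (a b : gV G) : joins e1 a b -> joins e2 a b -> e1 = e2.
  by move=> H1 H2; apply: low_inj; rewrite !(lower_end_joins _ H1) (lower_end_joins _ H2).
exists (runs adj x r); split.
- exact: runs_nonempty.
- by rewrite flatten_runs -Elr.
- by move=> y; rewrite flatten_runs -Elr.
- move=> e; case: (pos_adj e) => He.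
    by apply: (edge_in_run e (gends e).1 (gends e).2); rewrite ?He ?joins_ends.
  by apply: (edge_in_run e (gends e).2 (gends e).1); rewrite ?He // joinsC joins_ends.
- move=> s Hs i Hi y.
  have /(sortedP y) /(_ i Hi) /existsP[e He] := runs_sorted Hs.
  apply/eqP/cards1P; exists e; apply/setP => e'; rewrite !inE.
  by apply/idP/eqP => [He' | ->]; [apply: parallel He' He | ].
Qed.

Lemma index_flatten_succ (T : eqType) (ss : seq (seq T)) s i y :
  uniq (flatten ss) -> s \in ss -> i.+1 < size s ->
  index (nth y s i.+1) (flatten ss) = (index (nth y s i) (flatten ss)).+1.
Proof.
move=> + Hs Hi; have [ss1 [ss2 ->]] : exists ss1 ss2, ss = ss1 ++ s :: ss2.
  by case/splitPr: Hs => ss1 ss2; exists ss1, ss2.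
rewrite flatten_cat /= => Hu.
have [s_uniq not_in_ss1] : uniq s /\ forall k, k < size s -> nth y s k \notin flatten ss1.
  move: Hu; rewrite !cat_uniq => /and3P[_ /hasPn disj /and3P[-> _ _]]; split=> // k Hk.
  by apply: disj; rewrite mem_cat mem_nth.
have index_s k : k < size s ->
    index (nth y s k) (flatten ss1 ++ s ++ flatten ss2) = size (flatten ss1) + k.
  move=> Hk; rewrite index_cat (negbTE (not_in_ss1 k Hk)) index_cat mem_nth //.
  by rewrite index_uniq.
by rewrite !index_s //; lia.
Qed.

Lemma disjoint_union_of_paths_embedding (G : graph) : disjoint_union_of_paths G ->
  exists pos : gV G -> nat, path_embedding pos /\ forall x, pos x < #|gV G|.
Proof.
case=> ss [_ l_uniq l_full ss_edges ss_simple]; set l := flatten ss in l_uniq l_full.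
pose pos x := index x l.
have pos_inj : injective pos.
  by move=> x y Hxy; rewrite -(nth_index x (l_full x)) -/(pos x) Hxy nth_index.
have edge_pos e : exists a b, [/\ joins e a b, pos b = (pos a).+1 &
                                  #|[set e' | joins e' a b]| = 1].
  have [s Hs [i Hi [y He]]] := ss_edges e.
  by exists (nth y s i), (nth y s i.+1); rewrite /pos index_flatten_succ // ss_simple.
have low e a b : joins e a b -> pos b = (pos a).+1 -> lower_end pos e = pos a.
  by move=> /(lower_end_joins pos) -> ->; lia.
exists pos; split=> [|x]; last first.
  rewrite /pos (_ : #|gV G| = size l) ?index_mem //.
  by rewrite -(card_uniqP l_uniq); apply: eq_card => y; rewrite l_full.
split=> // [e | e1 e2 Hlow].
  by have [a [b [/joinsP[] [-> ->] -> _]]] := edge_pos e; auto.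
have [a [b [He1 Hb Hcard]]] := edge_pos e1; have [a' [b' [He2 Hb' _]]] := edge_pos e2.
move: Hlow; rewrite (low _ _ _ He1 Hb) (low _ _ _ He2 Hb') => /pos_inj Ea.
move: He2 Hb'; rewrite -Ea -Hb => He2 /pos_inj Eb; rewrite Eb in He2.
move/eqP/cards1P: Hcard => [z Ez].
have : e1 \in [set e' | joins e' a b] by rewrite inE.
have : e2 \in [set e' | joins e' a b] by rewrite inE.
by rewrite Ez !inE => /eqP -> /eqP ->.
Qed.

Definition delete_edge (H : graph) (e0 : gE H) : graph :=
  @Graph (gV H) {e : gE H | e != e0} (fun e => gends (sval e))
    (fun e => gnoloop (sval e)) (gnonempty H).

Lemma delete_edge_minor_step (H : graph) (e0 : gE H) : minor_step (delete_edge e0) H.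
Proof.
apply: Or43; exists e0, id, sval; split=> [| | e | e]; first by exists id.
- exact: val_inj.
- by split=> [He | [e' <-]]; [exists (exist _ e He) | exact: (svalP e')].
- exact: joins_ends.
Qed.

Lemma spanning_subgraph_minor (G H : graph) (f : gV G -> gV H) (g : gE G -> gE H) :
  bijective f -> injective g ->
  (forall e, joins (g e) (f (gends e).1) (f (gends e).2)) -> minor G H.
Proof.
move: {2}(#|gE H| - #|gE G|) (erefl (#|gE H| - #|gE G|)) => n.
elim: n H f g => [|n IH] H f g Hn f_bij g_inj hom.
  apply/rt_step/Or41; exists f, g; split=> //.
  by apply: inj_card_bij => //; lia.
have [e0 He0] : exists e0, e0 \notin codom g.
  apply/existsP; rewrite -negb_forall; apply/negP => /forallP g_onto.
  have : #|gE H| <= #|gE G|.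
    by rewrite -(card_codom g_inj); apply/subset_leq_card/subsetP => e _; apply: g_onto.
  lia.
have g_ne e : g e != e0 by apply: contraNneq He0 => <-; apply: codom_f.
pose g' e : gE (delete_edge e0) := exist _ (g e) (g_ne e).
apply: (@rt_trans _ _ _ (delete_edge e0)); last exact/rt_step/delete_edge_minor_step.
apply: (IH (delete_edge e0) f g') => // [|e1 e2 [] /g_inj //].
by rewrite /= card_sig cardC1 -predn_sub Hn.
Qed.

Definition path_ends m (k : 'I_m) : 'I_m.+1 * 'I_m.+1 := (inord k, inord k.+1).

Lemma path_ends_noloop m (k : 'I_m) : (path_ends k).1 != (path_ends k).2.
Proof.
have Hk := ltn_ord k.
by apply/eqP => /(congr1 val) /=; rewrite !inordK; lia.
Qed.

Definition path_graph (m : nat) : graph :=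
  @Graph 'I_m.+1 'I_m (@path_ends m) (@path_ends_noloop m) (ltac:(by rewrite card_ord)).

Section PathGraph.
Variable m : nat.
Implicit Types (vs : seq 'I_m.+1) (es : seq 'I_m).

Lemma path_graph_joinsP (e : 'I_m) (x y : 'I_m.+1) : joins (G := path_graph m) e x y ->
  (nat_of_ord x = e /\ nat_of_ord y = e.+1) \/ (nat_of_ord x = e.+1 /\ nat_of_ord y = e).
Proof.
have He := ltn_ord e.
by case/joinsP => -[<- <-]; rewrite /= !inordK; lia.
Qed.

Lemma path_graph_walk vs es : is_path (G := path_graph m) vs es -> ohead vs = Some ord0 ->
  forall k, k < size vs -> nat_of_ord (nth ord0 vs k) = k.
Proof.
case/is_pathP=> /= Hs Hu Ha Hh k; elim/ltn_ind: k => -[_ _ | k IH Hk].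
  by move: Hh; case: (vs) => //= x r [->].
have e0 : 'I_m by destruct es as [|e0 ?]; [exfalso; move: Hs; rewrite /=; lia | exact: e0].
have Hke : k < size es by lia.
have IHk := IH k (ltnSn k) (ltnW Hk).
case: (path_graph_joinsP (Ha e0 ord0 k Hke)) => /= -[Hk' Hk1]; first by lia.
have Hprev := IH k.-1 ltac:(lia) ltac:(lia).
have /eqP : nth ord0 vs k.-1 = nth ord0 vs k.+1 by apply: ord_inj; lia.
rewrite nth_uniq //; first by move=> /eqP; lia.
exact: leq_ltn_trans (leq_pred k) (ltnW Hk).
Qed.

Lemma path_graph_walk_edges vs es : is_path (G := path_graph m) vs es ->
  ohead vs = Some ord0 -> forall e0 k, k < size es -> nat_of_ord (nth e0 es k) = k.
Proof.
move=> Hp Hh e0 k Hk; have [/= Hs _ Ha] := (is_pathP _ _).1 Hp.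
have walk := path_graph_walk Hp Hh.
case: (path_graph_joinsP (Ha e0 ord0 k Hk)) => /= -[Hk0 Hk1].
  by rewrite -Hk0 walk //; lia.
by move: Hk0 Hk1; rewrite !walk //; lia.
Qed.

Lemma path_graph_uv_path vs es : uv_path (G := path_graph m) ord0 ord_max vs es ->
  vs = enum 'I_m.+1 /\ es = enum 'I_m.
Proof.
case/and3P=> Hp /eqP Hh /eqP Hl; have [/= Hs _ _] := (is_pathP _ _).1 Hp.
have walk := path_graph_walk Hp Hh; have walk_edges := path_graph_walk_edges Hp Hh.
have Hsize : size vs = m.+1.
  have := walk (size vs).-1; rewrite nth_last Hl /=; lia.
split.
  apply: (@eq_from_nth _ ord0); rewrite ?size_enum_ord // => k Hk.
  by apply: ord_inj; rewrite walk // nth_enum_ord; lia.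
have Hes : size es = m by move: Hs; rewrite Hsize => -[].
clear Hp Hs; case: es Hes walk_edges => [|e0 es] Hes walk_edges.
  by apply/esym/size0nil; rewrite size_enum_ord -Hes.
apply: (@eq_from_nth _ e0); rewrite ?size_enum_ord // => k Hk.
by apply: ord_inj; rewrite walk_edges // nth_enum_ord // -Hes.
Qed.

Lemma path_graph_spanning_usp : has_usp_of_size (path_graph m) #|gV (path_graph m)|.
Proof.
have Hp : is_path (G := path_graph m) (enum 'I_m.+1) (enum 'I_m).
  apply/is_pathP; split; rewrite ?size_enum_ord ?enum_uniq // => e0 x0 k Hk.
  rewrite /joins; apply/orP; left; apply/eqP.
  by congr pair; apply: ord_inj; rewrite /= inordK !nth_enum_ord //; lia.
have Huv : uv_path (G := path_graph m) ord0 ord_max (enum 'I_m.+1) (enum 'I_m).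
  by rewrite /uv_path Hp {1}enum_ordSl enum_ordSr last_rcons !eqxx.
exists (enum 'I_m.+1), (enum 'I_m); split; last by rewrite size_enum_ord card_ord.
exists ord0, ord_max; split=> [// | vs es /path_graph_uv_path[-> _] //|].
by move=> vs es /path_graph_uv_path[-> ->].
Qed.

End PathGraph.

Lemma tight_path_embedding_minor (G : graph) (pos : gV G -> nat) :
  path_embedding pos -> (forall x, pos x < #|gV G|) -> minor G (path_graph #|gV G|.-1).
Proof.
case=> pos_inj pos_adj low_inj pos_lt; set m := #|gV G|.-1.
have pos_le x : pos x <= m by have := pos_lt x; have := gnonempty G; lia.
have low_lt e : lower_end pos e < m.
  move: (pos_le (gends e).1) (pos_le (gends e).2) (pos_adj e).
  by rewrite /lower_end; lia.
pose f x : gV (path_graph m) := inord (pos x).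
pose g e : gE (path_graph m) := Ordinal (low_lt e).
apply: (spanning_subgraph_minor (f := f) (g := g)).
- apply: inj_card_bij; last by rewrite /= card_ord /m prednK // gnonempty.
  by move=> x y /(congr1 val); rewrite /= !inordK ?ltnS ?pos_le // => /pos_inj.
- by move=> e1 e2 /(congr1 val) /low_inj.
- move=> e; rewrite /joins; apply/orP.
  have := low_lt e; rewrite /lower_end; case: (pos_adj e) => He; [left | right];
    by apply/eqP; congr pair; apply: ord_inj; rewrite /= /lower_end !inordK; lia.
Qed.

Theorem proposition6p1 (G : graph) :
  spfloor G = 0 <-> disjoint_union_of_paths G.
Proof.
rewrite /spfloor; case: ex_minnP => n /asboolP[H [GH Hsp]] n_min.
split=> [n0 | G_paths].
- rewrite n0 in Hsp; have [pos emb] := spanning_usp_path_embedding ((sp_eq0P H).1 Hsp).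
  have [pos' emb'] := path_embedding_minor GH emb.
  exact: path_embedding_disjoint_union_of_paths emb'.
- have [pos [emb pos_lt]] := disjoint_union_of_paths_embedding G_paths.
  apply/eqP; rewrite -leqn0; apply: n_min; apply/asboolP.
  exists (path_graph #|gV G|.-1); split; first exact: tight_path_embedding_minor emb pos_lt.
  exact/sp_eq0P/path_graph_spanning_usp.
Qed.
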